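(* Let $k$ be a positive integer and let $(U,V,E)$ be a finite bipartite graph with parts $U,V$, $|U|=m$ and $|V|=n$. Let $\mathcal{P}$ be a partition of $V$ in which every part has size at most $\frac{n}{2k}$, and suppose each vertex $u\in U$ has neighbours in fewer than $k$ parts of $\mathcal{P}$. Then there exist $A\subseteq U$ and $B\subseteq V$ with $|A|\ge \frac{m}{k}$ and $|B|\ge\frac{n}{2k}$ such that there is no edge between $A$ and $B$. *)

From mathcomp Require Import all_boot.
Set Implicit Arguments. Unset Strict Implicit. Unset Printing Implicit Defensive.

Definition nparts_hit (U V : finType) (E : U -> V -> bool) (P : {set {set V}}) (u : U) : nat :=
  #|[set S in P | [exists v in S, E u v]]|.

From mathcomp Require Import all_boot zify.

Set Implicit Arguments.
Unset Strict Implicit.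
Unset Printing Implicit Defensive.

(* Peel off from the parts of P a block B of total size between n/2k and n/k; since
   the parts are small, such a block exists while at least n/k vertices of V remain.
   The vertices of U with no neighbour in B form A, unless they are too few; then the
   remaining vertices each see one part fewer among the remaining parts, and we
   recurse on them with k decreased by one, at most k times in total. *)

Lemma subset_sum_window (T : finType) (w : T -> nat) (c t : nat) (X : {set T}) :
  (forall x, x \in X -> w x <= c) -> t <= \sum_(x in X) w x ->
  exists2 Y : {set T}, Y \subset X & t <= \sum_(x in Y) w x <= t + c.
Proof.
move=> le_w_c le_t_X.
pose heavy (Y : {set T}) := (Y \subset X) && (t <= \sum_(x in Y) w x).
have heavyX : heavy X by rewrite /heavy subxx.
have [Y /andP[sYX le_t_Y] minY] := arg_minnP (fun Y : {set T} => #|Y|) heavyX.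
exists Y => //; rewrite le_t_Y /=.
have [-> | [x Yx]] := set_0Vmem Y; first by rewrite big_set0.
have /negbTE light_Yx : ~~ heavy (Y :\ x).
  by apply/negP => /minY; rewrite (cardsD1 x Y) Yx add1n ltnn.
rewrite /heavy (subset_trans (subD1set Y x) sYX) /= in light_Yx.
rewrite (big_setD1 x Yx) /= addnC leq_add //; first by apply: ltnW; rewrite ltnNge light_Yx.
exact/le_w_c/(subsetP sYX).
Qed.

Section NpartsHit.
Variables (U V : finType) (E : U -> V -> bool).

Lemma nparts_hit_setD (Q B : {set {set V}}) u : B \subset Q ->
  nparts_hit E Q u = nparts_hit E B u + nparts_hit E (Q :\: B) u.
Proof.
move=> sBQ; rewrite /nparts_hit -(cardsID B); congr (_ + _); apply: eq_card => S.
  rewrite !inE; case: (boolP (S \in B)) => [SB|_]; last by rewrite andbF.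
  by rewrite (subsetP sBQ S SB) andbT.
by rewrite !inE andbA.
Qed.

Lemma nparts_hit_eq0 (Q : {set {set V}}) u :
  nparts_hit E Q u = 0 -> {in cover Q, forall v, ~~ E u v}.
Proof.
move/eqP; rewrite cards_eq0 => /eqP/setP hit0 v /bigcupP[S SQ vS].
have := hit0 S; rewrite !inE SQ /= => /negbT; rewrite negb_exists => /forallP/(_ v).
by rewrite vS.
Qed.

End NpartsHit.

Definition weight {V : finType} (Q : {set {set V}}) : nat := \sum_(S in Q) #|S|.

Section AvoidHeavyBlock.
Variables (U V : finType) (E : U -> V -> bool) (P : {set {set V}}) (k : nat).
Hypothesis small_parts : forall S, S \in P -> 2 * k * #|S| <= #|V|.

Lemma light_heavy_block (Q : {set {set V}}) :
  Q \subset P -> #|V| <= 2 * k * weight Q ->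
  exists2 B : {set {set V}}, B \subset Q & #|V| <= 2 * k * weight B /\ k * weight B <= #|V|.
Proof.
move=> sQP heavyQ.
have [||B sBQ window] := @subset_sum_window _ (fun S : {set V} => 2 * k * #|S|) #|V| #|V| Q.
- by move=> S /(subsetP sQP); apply: small_parts.
- by rewrite -big_distrr; exact: heavyQ.
exists B => //; move: window; rewrite -big_distrr /= -/(weight B); lia.
Qed.

Lemma avoid_heavy_block j (Q : {set {set V}}) (U' : {set U}) :
  Q \subset P -> j.+1 * #|V| <= k * weight Q ->
  (forall u, u \in U' -> nparts_hit E Q u <= j) ->
  exists A : {set U}, exists2 B : {set {set V}}, B \subset Q &
    [/\ #|U'| <= j.+1 * #|A|, #|V| <= 2 * k * weight B &
        forall a b, a \in A -> b \in cover B -> ~~ E a b].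
Proof.
elim: j => [|j IH] in Q U' *; move=> sQP heavyQ hitQ;
  (have [|B sBQ [heavyB lightB]] := light_heavy_block sQP; first by nia).
  exists U'; exists B => //; split; rewrite ?mul1n // => a b /hitQ.
  by rewrite leqn0 (nparts_hit_setD E _ sBQ) addn_eq0 => /andP[/eqP/nparts_hit_eq0 + _]; apply.
pose A0 := [set u in U' | nparts_hit E B u == 0].
have [le_U'_A0 | lt_A0_U'] := leqP #|U'| (j.+2 * #|A0|).
  exists A0; exists B => //; split=> // a b.
  by rewrite inE => /andP[_ /eqP/nparts_hit_eq0]; apply.
have weightQ : weight Q = weight B + weight (Q :\: B).
  by rewrite /weight (big_setID B) (setIidPr sBQ).
have cardU' : #|A0| + #|U' :\: A0| = #|U'|.
  rewrite -(cardsID A0 U') (setIidPr _) //.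
  by apply/subsetP => u; rewrite inE => /andP[].
have [||A [B' sB'Q [le_A heavyB' avoidB']]] :=
  IH (Q :\: B) (U' :\: A0) (subset_trans (subsetDl Q B) sQP).
- by move: heavyQ; rewrite weightQ; nia.
- move=> u; rewrite !inE => /andP[+ U'u]; rewrite U'u /= => hitB.
  by have := hitQ u U'u; rewrite (nparts_hit_setD E _ sBQ); lia.
exists A; exists B'; first exact: subset_trans sB'Q (subsetDl Q B).
(* (j+2) |A0| < |U'| gives (j+1) |U'| < (j+2) |U' :\: A0| <= (j+2) (j+1) |A|. *)
by split=> //; nia.
Qed.

End AvoidHeavyBlock.

Theorem lemma3p1 (k : nat) (U V : finType) (E : U -> V -> bool)
    (P : {set {set V}}) :
  0 < k ->
  partition P [set: V] ->
  (forall S, S \in P -> 2 * k * #|S| <= #|V|) ->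
  (forall u : U, nparts_hit E P u < k) ->
  exists (A : {set U}) (B : {set V}),
    [/\ #|U| <= k * #|A|, #|V| <= 2 * k * #|B| &
        forall a b, a \in A -> b \in B -> ~~ E a b].
Proof.
case: k => // j _ partP small_parts hitP.
have [||A [B sBP [le_U_A heavyB avoidB]]] :=
  @avoid_heavy_block U V E P j.+1 small_parts j P [set: U] (subxx P).
- by rewrite /weight -(card_partition partP) cardsT.
- by move=> u _; apply: hitP.
exists A, (cover B); split => //; first by rewrite -cardsT.
by rewrite -(eqP (trivIsetS sBP (partition_trivIset partP))).
Qed.
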